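(* In the setting below, with $\mathcal{S}=\{j_1<\dots<j_s\}$ and $A=(\mathrm{Id}-B_{j_s})\cdots(\mathrm{Id}-B_{j_1})$, we have $\|A\|_2<1$.
   Context: Setting: $f:\mathbb{R}^p\to\mathbb{R}$ convex, differentiable with Lipschitz gradient; $g_j:\mathbb{R}\to\mathbb{R}\cup\{+\infty\}$ proper closed convex; $x^\star$ a minimizer of $f(x)+\sum_jg_j(x_j)$; $\mathcal{S}=\{j:\partial g_j(x^\star_j)\text{ is a singleton}\}$; $g_j$ is $\mathcal{C}^2$ near $x^\star_j$ for $j\in\mathcal{S}$, $f$ is $\mathcal{C}^2$ near $x^\star$, and $\nabla^2_{\mathcal{S},\mathcal{S}}f(x^\star)\succ0$. Step sizes $0<\gamma_j\le1/L_j$, $L_j$ the coordinatewise Lipschitz constant of $\nabla_jf$. For $j\in\mathcal{S}$, $z^\star_j=x^\star_j-\gamma_j\nabla_jf(x^\star)$, $p_j>0$ the derivative of $\operatorname{prox}_{\gamma_jg_j}$ at $z^\star_j$, $u_j=\frac1{\gamma_jp_j}-\frac1{\gamma_j}$, $M=\nabla^2_{\mathcal{S},\mathcal{S}}f(x^\star)+\operatorname{diag}(u)$ (symmetric positive definite), $M^{1/2}$ its symmetric square root, and $B_j=\gamma_jp_j\,M^{1/2}_{:,j}(M^{1/2}_{:,j})^\top\in\mathbb{R}^{s\times s}$. $\|\cdot\|_2$ is the spectral norm. *)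

From HB Require Import structures.
From mathcomp Require Import all_boot all_order all_algebra.
From mathcomp Require Import all_classical all_reals all_analysis.
Unset Strict Implicit. Unset Printing Implicit Defensive.
Import Order.TTheory GRing.Theory Num.Theory.
Import numFieldNormedType.Exports.
Local Open Scope classical_set_scope.
Local Open Scope ring_scope.

Section Defs.
Context {R : realType}.

Definition ecoord {p : nat} (j : 'I_p) : 'rV[R]_p := delta_mx 0 j.

Definition partial {p : nat} (j : 'I_p) (f : 'rV[R]_p -> R) (x : 'rV[R]_p) : R :=
  'D_(ecoord j) f x.

Definition gradf {p : nat} (f : 'rV[R]_p -> R) (x : 'rV[R]_p) : 'rV[R]_p :=
  \row_j partial j f x.

Definition hessian {p : nat} (f : 'rV[R]_p -> R) (x : 'rV[R]_p) (j k : 'I_p) : R :=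
  partial k (partial j f) x.

Definition convex_fun {p : nat} (f : 'rV[R]_p -> R) :=
  forall (x y : 'rV[R]_p) (t : R), 0 <= t <= 1 ->
    f (t *: x + (1 - t) *: y) <= t * f x + (1 - t) * f y.

Definition lipschitz_grad {p : nat} (f : 'rV[R]_p -> R) :=
  (forall x, differentiable f x) /\
  exists L : R, forall x y, `|gradf f x - gradf f y| <= L * `|x - y|.

Definition coord_lipschitz {p : nat} (f : 'rV[R]_p -> R) (j : 'I_p) (Lj : R) :=
  forall (x : 'rV[R]_p) (h : R),
    `|partial j f (x + h *: ecoord j) - partial j f x| <= Lj * `|h|.

Definition C2_near_vec {p : nat} (f : 'rV[R]_p -> R) (x : 'rV[R]_p) :=
  \forall y \near x, forall j k : 'I_p,
    derivable (partial j f) y (ecoord k) /\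
    {for y, continuous (partial k (partial j f))}.

Definition proper_fun (g : R -> \bar R) :=
  (forall x, g x != -oo%E) /\ exists x, g x \is a fin_num.

Definition closed_fun (g : R -> \bar R) := lower_semicontinuous g.

Definition convex_efun (g : R -> \bar R) :=
  forall (x y t : R), 0 < t < 1 ->
    (g (t * x + (1 - t) * y)%R <= t%:E * g x + (1 - t)%R%:E * g y)%E.

Definition subdiff (g : R -> \bar R) (a : R) : set R :=
  [set v | forall y, (g a + (v * (y - a))%R%:E <= g y)%E].

Definition is_singleton (A : set R) := exists v, A = [set v].

Definition C2_near (h : R -> R) (a : R) :=
  \forall y \near a, derivable h y 1 /\ derivable (derive1 h) y 1 /\
                     {for y, continuous (derive1n 2 h)}.

Definition C2_near_e (g : R -> \bar R) (a : R) :=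
  (\forall y \near a, g y \is a fin_num) /\ C2_near (fine \o g) a.

Definition objective {p : nat} (f : 'rV[R]_p -> R) (g : 'I_p -> R -> \bar R)
  (x : 'rV[R]_p) : \bar R :=
  ((f x)%:E + \sum_(j < p) g j (x ord0 j))%E.

Definition prox (gam : R) (g : R -> \bar R) (z : R) : R :=
  xget 0 [set y | forall w, (g y + ((y - z) ^+ 2 / (2 * gam))%R%:E
                             <= g w + ((w - z) ^+ 2 / (2 * gam))%R%:E)%E].

(* the elements j_1 < ... < j_s of S (enum of a set of ordinals is increasing) *)
Definition sidx {p : nat} (S : {set 'I_p}) (i : 'I_#|S|) : 'I_p := enum_val i.

Definition hessS {p : nat} (f : 'rV[R]_p -> R) (x : 'rV[R]_p) (S : {set 'I_p})
  : 'M[R]_#|S| := \matrix_(a, b) hessian f x (sidx S a) (sidx S b).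

Definition posdef {n : nat} (A : 'M[R]_n) :=
  forall v : 'cV[R]_n, v != 0 -> 0 < (v^T *m A *m v) 0 0.

Definition psd {n : nat} (A : 'M[R]_n) :=
  forall v : 'cV[R]_n, 0 <= (v^T *m A *m v) 0 0.

Definition zstar {p : nat} (f : 'rV[R]_p -> R) (xs : 'rV[R]_p) (gam : 'I_p -> R)
  (j : 'I_p) : R := xs ord0 j - gam j * partial j f xs.

Definition uvec {p : nat} (gam pp : 'I_p -> R) (j : 'I_p) : R :=
  1 / (gam j * pp j) - 1 / gam j.

Definition Mmat {p : nat} (f : 'rV[R]_p -> R) (xs : 'rV[R]_p) (S : {set 'I_p})
  (gam pp : 'I_p -> R) : 'M[R]_#|S| :=
  hessS f xs S + diag_mx (\row_a uvec gam pp (sidx S a)).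

(* B_{j_k} = gam p  M^{1/2}_{:,j_k} (M^{1/2}_{:,j_k})^T, Mh = M^{1/2} *)
Definition Bmat {p : nat} (S : {set 'I_p}) (gam pp : 'I_p -> R) (Mh : 'M[R]_#|S|)
  (k : 'I_#|S|) : 'M[R]_#|S| :=
  (gam (sidx S k) * pp (sidx S k)) *: (col k Mh *m (col k Mh)^T).

(* A = (Id - B_{j_s}) ... (Id - B_{j_1}) *)
Definition Aprod {p : nat} (S : {set 'I_p}) (gam pp : 'I_p -> R) (Mh : 'M[R]_#|S|)
  : 'M[R]_#|S| :=
  foldl (fun acc k => (1%:M - Bmat S gam pp Mh k) *m acc) 1%:M (enum 'I_#|S|).

Definition norm2 {n : nat} (v : 'cV[R]_n) : R := Num.sqrt (\sum_i v i 0 ^+ 2).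

Definition spec_norm {n : nat} (A : 'M[R]_n) : R :=
  sup [set norm2 (A *m v) | v in [set v : 'cV[R]_n | norm2 v <= 1]].

End Defs.

(* Each factor Id - B_j maps v to v - a_j <m_j, v> m_j, where m_j is the j-th
   column of M^{1/2} and a_j = gamma_j p_j, hence lowers |v|^2 by c_j <m_j, v>^2
   with c_j = a_j (2 - a_j |m_j|^2).  As |m_j|^2 = M_jj = (hess f)_jj + u_j, this
   is c_j = gamma_j p_j (1 + p_j (1 - gamma_j (hess f)_jj)) > 0, because
   (hess f)_jj <= L_j <= 1/gamma_j.  Telescoping, |A v|^2 = |v|^2 - |N v|^2 where
   the k-th row of N is sqrt(c_k) m_k^T times the product of the first k-1
   factors.  N is injective since the m_j span (M is positive definite, as
   u >= 0), and |v|^2 <= K |N v|^2 gives |A v|^2 <= K/(K+1) |v|^2.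
   Finally u >= 0 means p_j <= 1, which holds because prox is firmly
   nonexpansive; as prox is defined by choice, this needs the existence of
   proximal points, which follows from the lower semicontinuity and
   coercivity of g + (. - z)^2 / (2 gamma). *)

From HB Require Import structures.
From mathcomp Require Import all_boot all_order all_algebra.
From mathcomp Require Import all_classical all_reals all_analysis.
From mathcomp Require Import ring lra finmap.
Import Order.TTheory GRing.Theory Num.Theory.
Import numFieldNormedType.Exports.
Local Open Scope classical_set_scope.
Local Open Scope ring_scope.

Section RankOneUpdate.
Context {R : rcfType} {n : nat}.
Implicit Types (u v w m : 'cV[R]_n) (a : R).

Definition sqnorm v : R := \sum_i v i 0 ^+ 2.
Definition dotcv u v : R := \sum_i u i 0 * v i 0.

Lemma sqnorm_ge0 v : 0 <= sqnorm v.
Proof. by apply: sumr_ge0 => i _; exact: sqr_ge0. Qed.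

Lemma dotcvE u v : dotcv u v = (u^T *m v) 0 0.
Proof. by rewrite mxE; apply: eq_bigr => i _; rewrite mxE. Qed.

Lemma rank_one_update_mul a m w :
  (1%:M - a *: (m *m m^T)) *m w = w - (a * dotcv m w) *: m.
Proof.
rewrite mulmxBl mul1mx -scalemxAl -mulmxA [m^T *m w]mx11_scalar mul_mx_scalar.
by rewrite scalerA -dotcvE.
Qed.

Lemma sqnorm_rank_one_update a m w :
  sqnorm ((1%:M - a *: (m *m m^T)) *m w)
  = sqnorm w - a * (2 - a * sqnorm m) * dotcv m w ^+ 2.
Proof.
rewrite rank_one_update_mul /sqnorm; set c := a * dotcv m w.
have -> : \sum_i (w - c *: m) i 0 ^+ 2 =
          \sum_i (w i 0 ^+ 2 - (2 * c) * (m i 0 * w i 0) + c ^+ 2 * m i 0 ^+ 2).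
  by apply: eq_bigr => i _; rewrite !mxE; ring.
by rewrite big_split /= sumrB -!mulr_sumr -/(dotcv m w) /c; ring.
Qed.

Lemma sqnorm_mul_le (P : 'M[R]_n) w :
  sqnorm (P *m w) <= (\sum_i (\sum_j `|P i j|) ^+ 2) * sqnorm w.
Proof.
rewrite [sqnorm (P *m w)]/sqnorm mulr_suml; apply: ler_sum => i _.
have w_le j : `|w j 0| <= Num.sqrt (sqnorm w).
  rewrite -sqrtr_sqr ler_sqrt ?sqnorm_ge0 // /sqnorm (bigD1 j) //= lerDl.
  by apply: sumr_ge0 => k _; exact: sqr_ge0.
have Pw_le : `|(P *m w) i 0| <= (\sum_j `|P i j|) * Num.sqrt (sqnorm w).
  rewrite mxE mulr_suml; apply: le_trans (ler_norm_sum _ _ _) _.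
  by apply: ler_sum => j _; rewrite normrM ler_wpM2l.
rewrite -(sqr_sqrtr (sqnorm_ge0 w)) -exprMn -real_normK ?num_real //.
by rewrite lerXn2r ?nnegrE // (le_trans _ Pw_le).
Qed.

Lemma injective_mx_unit (A : 'M[R]_n) :
  (forall v : 'cV[R]_n, A *m v = 0 -> v = 0) -> A \in unitmx.
Proof.
move=> Ainj; rewrite -unitmx_tr -row_free_unit -kermx_eq0.
apply/eqP/row_matrixP => i; rewrite row0.
suff /(congr1 trmx) : (row i (kermx A^T))^T = 0 by rewrite trmxK trmx0.
apply: Ainj; have /(congr1 trmx) : row i (kermx A^T) *m A^T = 0.
  by rewrite -row_mul mulmx_ker row0.
by rewrite trmx_mul trmxK trmx0.
Qed.

End RankOneUpdate.

Section RankOneProduct.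
Context {R : rcfType} {n : nat} (a : 'I_n -> R) (m : 'I_n -> 'cV[R]_n).

Definition rank_one_step (k : 'I_n) : 'M[R]_n := 1%:M - a k *: (m k *m (m k)^T).

Definition prefix_prod (i : nat) : 'M[R]_n :=
  foldl (fun P k => rank_one_step k *m P) 1%:M (take i (enum 'I_n)).

Definition descent_coef (k : 'I_n) : R := a k * (2 - a k * sqnorm (m k)).

Lemma prefix_prod0 : prefix_prod 0 = 1%:M.
Proof. by rewrite /prefix_prod take0. Qed.

Lemma prefix_prodS {i : nat} (lt_in : (i < n)%N) :
  prefix_prod i.+1 = rank_one_step (Ordinal lt_in) *m prefix_prod i.
Proof.
rewrite /prefix_prod (take_nth (Ordinal lt_in)) ?size_enum_ord // foldl_rcons.
by rewrite -[i in nth _ _ i]/(nat_of_ord (Ordinal lt_in)) nth_ord_enum.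
Qed.

Lemma sqnorm_prefix_prod v (i : nat) : (i <= n)%N ->
  sqnorm (prefix_prod i *m v) = sqnorm v -
    \sum_(k < n | (k < i)%N) descent_coef k * dotcv (m k) (prefix_prod k *m v) ^+ 2.
Proof.
elim: i => [_|i IH lt_in]; first by rewrite prefix_prod0 mul1mx big1 ?subr0.
rewrite (prefix_prodS lt_in) -mulmxA /rank_one_step sqnorm_rank_one_update.
rewrite IH ?(ltnW lt_in) // [in RHS](bigD1 (Ordinal lt_in)) ?ltnSn //=.
rewrite [X in _ = _ - (_ + X)](eq_bigl (fun k : 'I_n => (k < i)%N)).
  by rewrite /descent_coef; ring.
by move=> k; rewrite ltnS leq_eqVlt -val_eqE /= andbC; case: ltngtP.
Qed.

Definition residual_mx : 'M[R]_n :=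
  \matrix_k (Num.sqrt (descent_coef k) *: ((m k)^T *m prefix_prod k)).

Lemma residual_mxE v k :
  (residual_mx *m v) k 0 = Num.sqrt (descent_coef k) * dotcv (m k) (prefix_prod k *m v).
Proof.
rewrite mxE dotcvE mulmxA [in RHS]mxE mulr_sumr.
by apply: eq_bigr => j _; rewrite !mxE mulrA.
Qed.

Hypothesis descent_coef_gt0 : forall k, 0 < descent_coef k.
Hypothesis span_m : forall v, (forall k, dotcv (m k) v = 0) -> v = 0.

Lemma sqnorm_prod_residual v :
  sqnorm (prefix_prod n *m v) = sqnorm v - sqnorm (residual_mx *m v).
Proof.
rewrite sqnorm_prefix_prod // (eq_bigl predT) => [|k]; last by rewrite ltn_ord.
congr (_ - _); apply: eq_bigr => k _.
by rewrite residual_mxE exprMn sqr_sqrtr ?ltW.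
Qed.

Lemma prefix_prod_fixed v : (forall k, dotcv (m k) (prefix_prod k *m v) = 0) ->
  forall i, (i <= n)%N -> prefix_prod i *m v = v.
Proof.
move=> orth; elim=> [_|i IH lt_in]; first by rewrite prefix_prod0 mul1mx.
have := orth (Ordinal lt_in); rewrite IH ?(ltnW lt_in) // => orth_i.
rewrite (prefix_prodS lt_in) -mulmxA IH; last exact: ltnW.
by rewrite /rank_one_step rank_one_update_mul orth_i mulr0 scale0r subr0.
Qed.

Lemma residual_mx_unit : residual_mx \in unitmx.
Proof.
apply: injective_mx_unit => v Nv0.
have orth k : dotcv (m k) (prefix_prod k *m v) = 0.
  have /eqP := congr1 (fun M : 'cV[R]_n => M k 0) Nv0.
  by rewrite residual_mxE mxE mulf_eq0 sqrtr_eq0 leNgt descent_coef_gt0 => /eqP.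
apply: span_m => k; have := orth k.
by rewrite prefix_prod_fixed // ltnW.
Qed.

Lemma prefix_prod_contraction :
  exists c, 0 <= c < 1 /\ forall v, sqnorm (prefix_prod n *m v) <= c * sqnorm v.
Proof.
pose K := \sum_i (\sum_j `|invmx residual_mx i j|) ^+ 2.
have K_ge0 : 0 <= K by apply: sumr_ge0 => i _; exact: sqr_ge0.
exists (K / (K + 1)); split.
  by rewrite divr_ge0 ?addr_ge0 //= ltr_pdivrMr ?mul1r ?ltrDl ?ltr_wpDl.
move=> v; rewrite sqnorm_prod_residual.
have : sqnorm v <= K * sqnorm (residual_mx *m v).
  by rewrite -{1}(mulKmx residual_mx_unit v) sqnorm_mul_le.
have := sqnorm_ge0 v; have := sqnorm_ge0 (residual_mx *m v).
move: (sqnorm v) (sqnorm _) => x s s_ge0 x_ge0 x_le.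
rewrite mulrAC ler_pdivlMr ?ltr_wpDl //; nra.
Qed.

End RankOneProduct.

Lemma seq_argmin {T : eqType} {d} {X : orderType d} (F : T -> X) (x : T) (s : seq T) :
  exists2 w, w \in x :: s & {in x :: s, forall w', (F w <= F w')%O}.
Proof.
elim: s x => [|a s IH] x.
  by exists x => [|w']; rewrite ?mem_head // inE => /eqP->.
have [w ws wmin] := IH a; have [le_wx|lt_xw] := leP (F w) (F x).
  exists w => [|w']; first by rewrite inE ws orbT.
  by rewrite inE => /predU1P[->|/wmin].
exists x => [|w']; first exact: mem_head.
by rewrite inE => /predU1P[->//|/wmin]; exact: le_trans (ltW lt_xw).
Qed.

Section LowerSemicontinuous.
Context {T : ptopologicalType} {R : realType}.
Implicit Types (f : T -> \bar R).
Local Open Scope ereal_scope.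

Lemma lsc_open_gt f (b : \bar R) : b != -oo -> lower_semicontinuous f ->
  open [set x | b < f x].
Proof.
case: b => [r _ /lower_semicontinuousP|_ _|//]; first exact.
suff -> : [set x | +oo < f x] = set0 by exact: open0.
by apply/seteqP; split => x //=; rewrite ltNge leey.
Qed.

Lemma lsc_compact_min f (K : set T) : compact K -> K !=set0 ->
  lower_semicontinuous f -> exists2 w, K w & forall y, K y -> f w <= f y.
Proof.
move=> coverK [x0 Kx0] lsc_f; rewrite compact_cover in coverK.
apply: contrapT => nomin.
have below y : K y -> exists2 w, K w & f w < f y.
  move=> Ky; apply: contrapT => nobelow; apply: nomin; exists y => // y' Ky'.
  by rewrite leNgt; apply/negP => lt; apply: nobelow; exists y'.
have finite_below w : K w -> f w != -oo.
  by move=> /below[w' _]; apply: contraTneq => ->; rewrite ltNge leNye.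
have [D DK Dcover] : finite_subset_cover K (fun w => [set y | f w < f y]) K.
  apply: coverK => [w Kw|y Ky]; first exact: lsc_open_gt (finite_below w Kw) lsc_f.
  by have [w Kw lt] := below y Ky; exists w.
have [w0 w0D _] := Dcover x0 Kx0.
have [w wD wmin] := seq_argmin f w0 D.
have {}wD : w \in D by move: wD; rewrite inE => /orP[/eqP->|].
have [w' w'D] := Dcover w (set_mem (DK _ wD)).
by rewrite /= ltNge wmin // inE w'D orbT.
Qed.

End LowerSemicontinuous.

Section RealLowerSemicontinuous.
Context {R : realType}.
Implicit Types (f : R -> \bar R).
Local Open Scope ereal_scope.

Lemma lte_fin_gap (a : R) (u : \bar R) : a%:E < u ->
  exists2 e : R, (0 < e)%R & (a + e)%:E < u.
Proof.
case: u => [r|_|//]; last by exists 1%R; rewrite ?ltey.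
by rewrite lte_fin => lt_ar; exists ((r - a) / 2)%R; rewrite ?lte_fin; lra.
Qed.

Lemma lsc_addr_continuous f (h : R -> R) :
  lower_semicontinuous f -> continuous h ->
  lower_semicontinuous (fun x => f x + (h x)%:E).
Proof.
move=> lsc_f cont_h x a.
have [->|fx_ninf] := eqVneq (f x) -oo; first by rewrite ltNge leNye.
rewrite -lteBlDr // => /lte_fin_gap[e e_gt0 lt_fx].
have [V nV fV] := lsc_f x _ lt_fx.
have h_near : \forall y \near x, (h x - e < h y)%R.
  have lt_e : (h x - e < h x)%R by rewrite ltrBlDr ltrDl.
  exact: cvgr_gt _ (cont_h x) _ lt_e.
exists (V `&` [set y | h x - e < h y]%R); first exact: filterI.
move=> y [Vy hy]; have := fV y Vy.
case: (f y) => [r| |]; last by rewrite ltNge leNye.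
  by rewrite -EFinD !lte_fin /= in hy *; lra.
by rewrite addye ?ltey.
Qed.

Lemma lsc_min_of_bounded_sublevel f (x0 r : R) : lower_semicontinuous f ->
  (forall y, f y <= f x0 -> (`|y - x0| <= r)%R) -> exists w, forall y, f w <= f y.
Proof.
move=> lsc_f bounded.
have inK y : f y <= f x0 -> `[(x0 - r)%R, (x0 + r)%R]%classic y.
  by move/bounded; rewrite /= in_itv /= -ler_distl.
have [w _ wmin] := lsc_compact_min _ _ (@segment_compact _ (x0 - r) (x0 + r))
  (ex_intro _ x0 (inK _ (lexx _))) lsc_f.
exists w => y; have [/inK|lt_y] := leP (f y) (f x0); first exact: wmin.
exact: le_trans (wmin _ (inK _ (lexx _))) (ltW lt_y).
Qed.

End RealLowerSemicontinuous.

Lemma le0_of_forall_le_mul {R : realFieldType} (D Q : R) : 0 <= Q ->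
  (forall t, 0 < t < 1 -> D <= t * Q) -> D <= 0.
Proof.
move=> Q_ge0 small; rewrite leNgt; apply/negP => D_gt0.
pose t := D / (2 * (D + Q)).
have DQ_gt0 : 0 < 2 * (D + Q) by lra.
have tQ_lt : t * Q < D by rewrite mulrAC ltr_pdivrMr //; nra.
have t_lt1 : t < 1 by rewrite ltr_pdivrMr // mul1r; lra.
have t_gt0 : 0 < t by rewrite divr_gt0.
by have := small t (introT andP (conj t_gt0 t_lt1)); lra.
Qed.

Lemma sqr_le_affine_bound {R : realFieldType} (t A B : R) : 0 <= t -> 0 <= B ->
  t ^+ 2 <= A + B * t -> t <= 1 + `|A| + B.
Proof.
move=> t_ge0 B_ge0 le_t; have A_le := ler_norm A; have A_ge0 := normr_ge0 A.
have [t_le1|t_gt1] := lerP t 1; first lra.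
nra.
Qed.

Section ProximalPoint.
Context {R : realType} {g : R -> \bar R} {gam : R}.
Hypotheses (gam_gt0 : 0 < gam) (g_proper : proper_fun g)
  (g_closed : closed_fun g) (g_convex : convex_efun g).

Definition prox_obj (z y : R) : \bar R := (g y + ((y - z) ^+ 2 / (2 * gam))%:E)%E.

Definition is_prox_point (z y : R) : Prop := forall w, (prox_obj z y <= prox_obj z w)%E.

Lemma prox_point_fin {z y : R} : is_prox_point z y -> g y \is a fin_num.
Proof.
move=> ymin; have [x0 gx0] := g_proper.2; have := ymin x0; rewrite /prox_obj.
case gy: (g y) => [r| |] //; last by have := g_proper.1 y; rewrite gy.
by rewrite addye // leye_eq; move: gx0; case: (g x0).
Qed.

Lemma prox_point_variational {z y w ry rw : R} : is_prox_point z y ->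
  g y = ry%:E -> g w = rw%:E -> ry <= rw + (y - z) * (w - y) / gam.
Proof.
move=> ymin gy gw; set P := (y - z) * (w - y) / gam.
pose Q := (w - y) ^+ 2 / (2 * gam).
have Q_ge0 : 0 <= Q by rewrite divr_ge0 ?sqr_ge0 ?mulr_ge0 ?ltW.
suff : ry - rw - P <= 0 by lra.
apply: (le0_of_forall_le_mul _ _ Q_ge0) => t t01; have /andP[t_gt0 _] := t01.
have convex_t := g_convex w y t t01; rewrite gw gy -!EFinM -EFinD in convex_t.
have := le_trans (ymin (t * w + (1 - t) * y)) (leeD2r _ convex_t).
rewrite /prox_obj gy -!EFinD lee_fin; clear convex_t.
have -> : (t * w + (1 - t) * y - z) ^+ 2 / (2 * gam) =
          (y - z) ^+ 2 / (2 * gam) + t * P + t ^+ 2 * Q.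
  by rewrite /P /Q; field; rewrite gt_eqF.
nra.
Qed.

Lemma prox_point_firm z1 z2 y1 y2 : is_prox_point z1 y1 -> is_prox_point z2 y2 ->
  (y1 - y2) ^+ 2 <= (z1 - z2) * (y1 - y2).
Proof.
move=> y1min y2min.
have /fineK gy1 := prox_point_fin y1min; have /fineK gy2 := prox_point_fin y2min.
have := prox_point_variational y1min (esym gy1) (esym gy2).
have := prox_point_variational y2min (esym gy2) (esym gy1).
rewrite -!mulrA; set gi := gam^-1; have : 0 < gi by rewrite invr_gt0.
nra.
Qed.

Lemma prox_obj_lsc z : lower_semicontinuous (prox_obj z).
Proof.
apply: lsc_addr_continuous => // y.
apply: cvgMl; rewrite expr2; apply: cvgM; apply: cvgB => //; exact: cvg_cst.
Qed.

Lemma convex_lsc_affine_minorant x0 : g x0 \is a fin_num ->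
  exists c d : R, 0 <= d /\ forall y, ((c - d * `|y - x0|)%:E <= g y)%E.
Proof.
move=> gx0_fin; set g0 := fine (g x0).
have [V nV Vlb] : exists2 V, nbhs x0 V & forall y, V y -> ((g0 - 1)%:E < g y)%E.
  by apply: g_closed; rewrite -(fineK gx0_fin) -/g0 lte_fin; lra.
have [del /= del_gt0 ballV] := (nbhs_ballP _ _).1 nV.
exists (g0 - 1), (2 / del); split=> [|y]; first by rewrite divr_ge0 //; lra.
have D_ge0 : 0 <= 2 / del * `|y - x0| by rewrite mulr_ge0 // divr_ge0 //; lra.
have [near|far] := ltP `|y - x0| del.
  apply: le_trans (ltW (Vlb y _)); first by rewrite lee_fin; lra.
  by apply: ballV; rewrite /ball /= distrC.
pose t := del / (2 * `|y - x0|).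
have dist_gt0 : 0 < `|y - x0| by lra.
have tD : t * (2 / del * `|y - x0|) = 1 by rewrite /t; field; rewrite !gt_eqF.
have t_gt0 : 0 < t by rewrite divr_gt0 //; lra.
have t_lt1 : t < 1 by rewrite ltr_pdivrMr; lra.
have q_ball : ball x0 del (t * y + (1 - t) * x0).
  rewrite /ball /= (_ : x0 - _ = t * (x0 - y)); last by ring.
  rewrite normrM gtr0_norm // distrC /t.
  have -> : del / (2 * `|y - x0|) * `|y - x0| = del / 2 by field; rewrite gt_eqF.
  lra.
have := Vlb _ (ballV _ q_ball).
have := g_convex y x0 t (introT andP (conj t_gt0 t_lt1)).
rewrite -(fineK gx0_fin) -/g0; move: (g_proper.1 y).
case: (g y) => [r _| _ _ _|//]; last exact: leey.
rewrite -!EFinM -EFinD => /lt_le_trans/[apply]; rewrite !lte_fin lee_fin.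
nra.
Qed.

Lemma prox_obj_sublevel_bounded z x0 : g x0 \is a fin_num ->
  exists r, forall y, (prox_obj z y <= prox_obj z x0)%E -> `|y - x0| <= r.
Proof.
move=> gx0_fin; have [c [d [d_ge0 lb]]] := convex_lsc_affine_minorant _ gx0_fin.
pose A := 4 * gam * (fine (g x0) - c) + 4 * (x0 - z) ^+ 2; pose B := 4 * gam * d.
exists (1 + `|A| + B) => y; have := lb y; rewrite /prox_obj -(fineK gx0_fin).
case: (g y) => [r| |]; last by rewrite leNye.
  rewrite -!EFinD !lee_fin => lb_y le_obj.
  apply: sqr_le_affine_bound => //; first by rewrite !mulr_ge0 // ltW.
  have := sqr_ge0 (y + x0 - 2 * z).
  have -> : `|y - x0| ^+ 2 = (y - x0) ^+ 2 by rewrite real_normK ?num_real.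
  have sqr_obj a : (a - z) ^+ 2 = 2 * gam * ((a - z) ^+ 2 / (2 * gam)).
    by field; rewrite gt_eqF.
  move: le_obj (sqr_obj y) (sqr_obj x0) (gam_gt0).
  set u := (y - z) ^+ 2 / _; set u0 := (x0 - z) ^+ 2 / _.
  rewrite /A /B; nra.
by move=> _; rewrite addye // leye_eq.
Qed.

Lemma prox_point_exists z : exists y, is_prox_point z y.
Proof.
have [x0 gx0] := g_proper.2; have [r bounded] := prox_obj_sublevel_bounded z _ gx0.
exact: lsc_min_of_bounded_sublevel (prox_obj_lsc z) bounded.
Qed.

Lemma prox_firmly_nonexpansive z1 z2 :
  (prox gam g z1 - prox gam g z2) ^+ 2 <= (z1 - z2) * (prox gam g z1 - prox gam g z2).
Proof.
by apply: prox_point_firm; apply: xgetPex; exact: prox_point_exists.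
Qed.

End ProximalPoint.

Lemma derive_le_of_quotient_le {R : realType} {V : normedModType R} (F : V -> R)
  (x v : V) (b : R) : derivable F x v ->
  (forall h : R, h != 0 -> h^-1 *: (F (h *: v + x) - F x) <= b) -> 'D_v F x <= b.
Proof.
move=> dF quotient_le; apply: limr_le; first exact: dF.
near=> h; apply: quotient_le; near: h; exact: nbhs_dnbhs_neq.
Unshelve. all: by end_near.
Qed.

Lemma firmly_nonexpansive_derive_le1 {R : realType} (F : R -> R) (z d : R) :
  (forall z1 z2, (F z1 - F z2) ^+ 2 <= (z1 - z2) * (F z1 - F z2)) ->
  is_derive z 1 F d -> d <= 1.
Proof.
move=> firm dF; rewrite -(@derive_val _ _ _ _ _ _ _ dF).
apply: derive_le_of_quotient_le => [|h h_neq0]; first by case: dF.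
have := firm (h *: 1 + z) z; rewrite addrK /GRing.scale /= mulr1.
move: (F (h + z) - F z) => dy firm_h.
have h2_gt0 : 0 < h ^+ 2 by rewrite exprn_even_gt0.
have -> : h^-1 * dy = h * dy / h ^+ 2 by field.
rewrite ler_pdivrMr // mul1r.
have := sqr_ge0 (h - dy); nra.
Qed.

Lemma hessian_diag_le {R : realType} {p : nat} (f : 'rV[R]_p -> R) (x : 'rV[R]_p)
  (j : 'I_p) (Lj : R) :
  coord_lipschitz f j Lj -> derivable (partial j f) x (ecoord j) ->
  hessian f x j j <= Lj.
Proof.
move=> lip dfj; apply: derive_le_of_quotient_le => // h h_neq0.
apply: le_trans (ler_norm _) _.
rewrite normrZ normrV ?unitfE // mulrC ler_pdivrMr ?normr_gt0 // [h *: _ + _]addrC.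
exact: lip.
Qed.

Lemma spec_norm_le_sqrt {R : realType} {n : nat} (A : 'M[R]_n) (c : R) : 0 <= c ->
  (forall v, sqnorm (A *m v) <= c * sqnorm v) -> spec_norm A <= Num.sqrt c.
Proof.
move=> c_ge0 bound; apply: ge_sup.
  exists (norm2 (A *m 0)), 0 => //=.
  by rewrite /norm2 big1 ?sqrtr0 ?ler01 // => i _; rewrite mxE expr0n.
move=> _ [v /= v_le1 <-]; apply: ler_wsqrtr; apply: le_trans (bound v) _.
move: v_le1; rewrite -sqrtr1 ler_sqrt // => v_le1.
by rewrite -[leRHS]mulr1 ler_wpM2l.
Qed.

Lemma posdef_add_diag {R : realType} {n : nat} (H : 'M[R]_n) (d : 'rV[R]_n) :
  posdef H -> (forall k, 0 <= d 0 k) -> posdef (H + diag_mx d).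
Proof.
move=> H_posdef d_ge0 v v_neq0.
have diag_ge0 : 0 <= (v^T *m diag_mx d *m v) 0 0.
  rewrite mul_mx_diag mxE; apply: sumr_ge0 => i _; rewrite !mxE mulrAC -expr2.
  exact: mulr_ge0 (sqr_ge0 _) (d_ge0 i).
by rewrite mulmxDr mulmxDl mxE ltr_wpDr // H_posdef.
Qed.

Section SymmetricSquareRoot.
Context {R : realType} {n : nat} (Mh : 'M[R]_n).
Hypothesis Mh_sym : Mh^T = Mh.

Lemma dotcv_col_sym k v : dotcv (col k Mh) v = (Mh *m v) k 0.
Proof.
rewrite /dotcv mxE; apply: eq_bigr => j _.
by rewrite -[Mh in RHS]Mh_sym !mxE.
Qed.

Lemma sqnorm_col_sym k : sqnorm (col k Mh) = (Mh *m Mh) k k.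
Proof.
rewrite /sqnorm mxE; apply: eq_bigr => j _.
by rewrite -[Mh in X in _ = X * _]Mh_sym !mxE expr2.
Qed.

Lemma sym_posdef_sqr_col_span : posdef (Mh *m Mh) ->
  forall v, (forall k, dotcv (col k Mh) v = 0) -> v = 0.
Proof.
move=> M_posdef v orth; have Mhv0 : Mh *m v = 0.
  by apply/matrixP => k j; rewrite ord1 -dotcv_col_sym orth mxE.
apply/eqP; apply: contraT => v_neq0; have := M_posdef v v_neq0.
by rewrite -!mulmxA Mhv0 !mulmx0 mxE ltxx.
Qed.

End SymmetricSquareRoot.

Lemma prox_step_coef_gt0 {R : realFieldType} (gam p H : R) :
  0 < gam -> 0 < p -> gam * H <= 1 ->
  0 < gam * p * (2 - gam * p * (H + (1 / (gam * p) - 1 / gam))).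
Proof.
move=> gam_gt0 p_gt0 gamH_le1.
have -> : gam * p * (2 - gam * p * (H + (1 / (gam * p) - 1 / gam))) =
          gam * p * (1 + p * (1 - gam * H)) by field; rewrite !gt_eqF.
by rewrite !mulr_gt0 // ltr_pwDl // mulr_ge0 ?subr_ge0 // ltW.
Qed.

Lemma prox_step_gap_ge0 {R : realFieldType} (gam p : R) :
  0 < gam -> 0 < p -> p <= 1 -> 0 <= 1 / (gam * p) - 1 / gam.
Proof.
move=> gam_gt0 p_gt0 p_le1.
by rewrite !div1r subr_ge0 lef_pV2 ?posrE ?mulr_gt0 // ger_pMr.
Qed.

Lemma Mmat_diag {R : realType} {p : nat} (f : 'rV[R]_p -> R) (xs : 'rV[R]_p)
  (S : {set 'I_p}) (gam pp : 'I_p -> R) (k : 'I_#|S|) :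
  Mmat f xs S gam pp k k = hessian f xs (sidx S k) (sidx S k) + uvec gam pp (sidx S k).
Proof. by rewrite !mxE eqxx mulr1n. Qed.

Lemma Aprod_prefix_prod {R : realType} {p : nat} (S : {set 'I_p})
  (gam pp : 'I_p -> R) (Mh : 'M[R]_#|S|) :
  Aprod S gam pp Mh =
  prefix_prod (fun k => gam (sidx S k) * pp (sidx S k)) (fun k => col k Mh) #|S|.
Proof. by rewrite /prefix_prod take_oversize ?size_enum_ord. Qed.

Theorem lemma8 (R : realType) (p : nat) (f : 'rV[R]_p -> R)
  (g : 'I_p -> R -> \bar R) (xs : 'rV[R]_p) (S : {set 'I_p})
  (L gam pp : 'I_p -> R) (Mh : 'M[R]_#|S|) :
  convex_fun f -> lipschitz_grad f ->
  (forall j, proper_fun (g j) /\ closed_fun (g j) /\ convex_efun (g j)) ->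
  (forall x, (objective f g xs <= objective f g x)%E) ->
  (forall j, j \in S <-> is_singleton (subdiff (g j) (xs ord0 j))) ->
  (forall j, j \in S -> C2_near_e (g j) (xs ord0 j)) ->
  C2_near_vec f xs ->
  posdef (hessS f xs S) ->
  (forall j, coord_lipschitz f j (L j)) ->
  (forall j, 0 < gam j /\ gam j * L j <= 1) ->
  (forall j, j \in S ->
     is_derive (zstar f xs gam j) 1 (prox (gam j) (g j)) (pp j) /\ 0 < pp j) ->
  Mh^T = Mh -> psd Mh -> Mh *m Mh = Mmat f xs S gam pp ->
  spec_norm (Aprod S gam pp Mh) < 1.
Proof.
(* The optimality of [xs] and the description of [S] play no role in the bound. *)
move=> _ _ g_props _ _ _ f_C2 hess_posdef f_lip gam_props prox_deriv Mh_sym _ Mh_sqr.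
pose a k := gam (sidx S k) * pp (sidx S k).
have coord_facts k : let j := sidx S k in
    [/\ 0 < gam j, 0 < pp j, pp j <= 1 & gam j * hessian f xs j j <= 1].
  move=> j; have jS : j \in S := enum_valP k.
  have [gam_gt0 gamL_le1] := gam_props j; have [dprox pp_gt0] := prox_deriv j jS.
  have [g_proper [g_closed g_convex]] := g_props j.
  split=> //; first exact: firmly_nonexpansive_derive_le1
    (prox_firmly_nonexpansive gam_gt0 g_proper g_closed g_convex) dprox.
  apply: le_trans gamL_le1; rewrite ler_pM2l //.
  exact: hessian_diag_le (f_lip j) (nbhs_singleton f_C2 j j).1.
have M_posdef : posdef (Mh *m Mh).
  rewrite Mh_sqr; apply: posdef_add_diag => // k.
  by have [? ? ? _] := coord_facts k; rewrite mxE; exact: prox_step_gap_ge0.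
have coef_gt0 k : 0 < descent_coef a (fun k => col k Mh) k.
  rewrite /descent_coef sqnorm_col_sym // Mh_sqr Mmat_diag.
  by have [? ? _ ?] := coord_facts k; exact: prox_step_coef_gt0.
have [c [/andP[c_ge0 c_lt1] contraction]] := prefix_prod_contraction _ _ coef_gt0
  (sym_posdef_sqr_col_span _ Mh_sym M_posdef).
rewrite Aprod_prefix_prod.
apply: le_lt_trans (spec_norm_le_sqrt _ _ c_ge0 contraction) _.
by rewrite -sqrtr1 ltr_sqrt.
Qed.
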